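(* Consider an iteration $t$ of the NSGA-II optimizing \textsc{OneMinMax} (any population size $N$, any offspring generation). All individuals of $R_t$ have rank one, and crowding distances are computed with respect to $R_t$. Let $v_1^{\min}=\min\{f_1(x):x\in R_t\}$, $v_1^{\max}=\max\{f_1(x):x\in R_t\}$, and assume $v_1^{\max}>v_1^{\min}$. Let $V=f(R_t)$, $V^+_{\mathrm{in}}=\{(v_1,v_2)\in V:\exists y\in R_t,\ f(y)=(v_1+1,v_2-1)\}$ and $V^-_{\mathrm{in}}=\{(v_1,v_2)\in V:\exists y\in R_t,\ f(y)=(v_1-1,v_2+1)\}$. Then for every $(v_1,v_2)\in V\setminus(V^+_{\mathrm{in}}\cap V^-_{\mathrm{in}})$ there is an individual $x\in R_t$ with $f(x)=(v_1,v_2)$ and $\mathrm{cDis}(x)\ge \frac{2}{v_1^{\max}-v_1^{\min}}$ (regardless of how ties are broken in the sorting steps of the crowding distance computation).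
   Context: Search space $\{0,1\}^n$; objective $f=(f_1,f_2)$, both maximized. Populations are multisets of bit strings; $f(P)=\{f(x):x\in P\}$. Crowding distance of the individuals of a set $S$ (computed with respect to $S$): start with $\mathrm{cDis}(x)=0$ for all $x\in S$; for each $i\in\{1,2\}$, sort $S$ in ascending $f_i$-value as $S_{i.1},\dots,S_{i.|S|}$ (ties broken arbitrarily), set $\mathrm{cDis}(S_{i.1})=\mathrm{cDis}(S_{i.|S|})=+\infty$, and for $2\le j\le |S|-1$ add $\frac{f_i(S_{i.j+1})-f_i(S_{i.j-1})}{f_i(S_{i.|S|})-f_i(S_{i.1})}$ to $\mathrm{cDis}(S_{i.j})$. In the NSGA-II, $R_t=P_t\cup Q_t$ denotes the multiset union of the parent population $P_t$ and offspring population $Q_t$ in iteration $t$, each of size $N$. \textsc{OneMinMax}: $f(x)=(n-\sum_{i=1}^n x_i,\ \sum_{i=1}^n x_i)$; no bit string strictly dominates another, so all individuals of any population have rank one in non-dominated sorting. *)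

From HB Require Import structures.
From mathcomp Require Import all_boot all_order all_algebra.
From mathcomp Require Import constructive_ereal.
Set Implicit Arguments. Unset Strict Implicit. Unset Printing Implicit Defensive.
Import Order.TTheory GRing.Theory Num.Theory.

Definition bitstr (n : nat) := n.-tuple bool.

Definition f1 n (x : bitstr n) : nat := n - count id x.
Definition f2 n (x : bitstr n) : nat := count id x.
Definition fOMM n (x : bitstr n) : nat * nat := (f1 x, f2 x).

(* A population (multiset) of size M is an indexed family R : 'I_M -> bitstr n. *)

Definition v1max n M (R : 'I_M -> bitstr n) : nat := \max_(k < M) f1 (R k).
Definition v1min n M (R : 'I_M -> bitstr n) : nat :=
  \big[minn/v1max R]_(k < M) f1 (R k).

(* A sorting of the population in ascending g-value (ties broken arbitrarily):
   a listing of all indices, each exactly once, nondecreasing in g. *)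
Definition is_sort_by M (g : 'I_M -> nat) (s : seq 'I_M) : Prop :=
  perm_eq s (enum 'I_M) /\ sorted (fun a b => g a <= g b) s.

(* Contribution of objective g (with sorting s) to the crowding distance of
   individual k: +oo at the two ends of the sorted list, otherwise
   (g(S_{j+1}) - g(S_{j-1})) / (g(S_|S|) - g(S_1)). (0-based positions.) *)
Definition cd_part M (g : 'I_M -> nat) (s : seq 'I_M) (k : 'I_M) : \bar rat :=
  let j := index k s in
  if (j == 0%N) || (j == M.-1) then +oo%E
  else (((g (nth k s j.+1))%:R - (g (nth k s j.-1))%:R) /
        ((g (nth k s M.-1))%:R - (g (nth k s 0))%:R) : rat)%:E.

Definition cDis n M (R : 'I_M -> bitstr n) (s1 s2 : seq 'I_M) (k : 'I_M)
  : \bar rat :=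
  (cd_part (fun a => f1 (R a)) s1 k + cd_part (fun a => f2 (R a)) s2 k)%E.

Definition inVplus n M (R : 'I_M -> bitstr n) (v : nat * nat) : Prop :=
  exists y : 'I_M, f1 (R y) = v.1 + 1 /\ f2 (R y) + 1 = v.2.
Definition inVminus n M (R : 'I_M -> bitstr n) (v : nat * nat) : Prop :=
  exists y : 'I_M, f1 (R y) + 1 = v.1 /\ f2 (R y) = v.2 + 1.

From HB Require Import structures.
From mathcomp Require Import all_boot all_order all_algebra.
From mathcomp Require Import constructive_ereal.
From mathcomp Require Import zify ring.
Import Order.TTheory GRing.Theory Num.Theory.

(* The argument concerns one objective g at a time.  In a g-sorting s of the
   population, take the LAST position j holding a given value v.  If j is an
   end of s, its contribution is +oo.  Otherwise the successor has value > v,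
   and when no individual has value v + 1 it has value >= v + 2, while the
   predecessor has value <= v; so the contribution is at least 2 divided by
   the g-range of s, hence at least 2 / (hi - lo) for any bounds lo < hi of g.

   For OneMinMax, f2 = n - f1, so (v1, v2) is outside V^+_in exactly when no
   individual has f1-value v1 + 1, and outside V^-_in exactly when none has
   f2-value v2 + 1.  Applying the one-objective fact to f1 or to f2 (the
   ranges of f1 and f2 over R are equal) and noting that the other objective
   contributes a nonnegative amount gives the theorem. *)

Lemma two_div_le_ratio (A C D : nat) :
  (2 <= A)%N -> (A <= C)%N -> (C <= D)%N ->
  ((2%:R / D%:R : rat) <= A%:R / C%:R)%R.
Proof.
move=> A_ge2 A_leC C_leD.
have C_gt0 : (0 < C%:R :> rat)%R by rewrite ltr0n; lia.
have D_gt0 : (0 < D%:R :> rat)%R by rewrite ltr0n; lia.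
rewrite ler_pdivlMr // mulrAC ler_pdivrMr // -!natrM ler_nat.
nia.
Qed.

Section SortedContribution.

Variables (M : nat) (g : 'I_M -> nat) (s : seq 'I_M).
Hypothesis s_sorted : is_sort_by g s.

Lemma sort_size : size s = M.
Proof. by rewrite (perm_size s_sorted.1) size_enum_ord. Qed.

Lemma sort_uniq : uniq s.
Proof. by rewrite (perm_uniq s_sorted.1) enum_uniq. Qed.

Lemma sort_mem (k : 'I_M) : k \in s.
Proof. by rewrite (perm_mem s_sorted.1) mem_enum. Qed.

Lemma index_sort_nth (x0 : 'I_M) (j : nat) : (j < M)%N -> index (nth x0 s j) s = j.
Proof. by move=> j_lt; rewrite index_uniq ?sort_uniq ?sort_size. Qed.

Lemma sort_nth_mono (x0 : 'I_M) (i j : nat) :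
  (i <= j)%N -> (j < M)%N -> (g (nth x0 s i) <= g (nth x0 s j))%N.
Proof.
move=> i_le_j j_lt.
have g_le_trans : transitive (fun a b : 'I_M => (g a <= g b)%N).
  by move=> a b c; apply: leq_trans.
apply: (sorted_leq_nth g_le_trans (fun a => leqnn (g a)) x0 s_sorted.2);
  rewrite ?inE ?sort_size //; lia.
Qed.

Lemma cd_part_interior (x0 : 'I_M) (j : nat) :
  (0 < j)%N -> (j < M.-1)%N ->
  cd_part g s (nth x0 s j) =
    (((g (nth x0 s j.+1) - g (nth x0 s j.-1))%:R /
      (g (nth x0 s M.-1) - g (nth x0 s 0))%:R : rat))%:E.
Proof.
move=> j_gt0 j_lt.
have nthE i : (i < M)%N -> nth (nth x0 s j) s i = nth x0 s i.
  by move=> i_lt; apply: set_nth_default; rewrite sort_size.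
rewrite /cd_part index_sort_nth; last by lia.
case: ifP => [/orP[/eqP|/eqP]|_]; try lia.
have gap_le : (g (nth x0 s j.-1) <= g (nth x0 s j.+1))%N.
  by apply: sort_nth_mono; lia.
have range_le : (g (nth x0 s 0) <= g (nth x0 s M.-1))%N.
  by apply: sort_nth_mono; lia.
by rewrite (natrB _ gap_le) (natrB _ range_le) !nthE //; lia.
Qed.

Lemma cd_part_ge0 (k : 'I_M) : (0 <= cd_part g s k)%E.
Proof.
have k_lt : (index k s < M)%N by have := sort_mem k; rewrite -index_mem sort_size.
have [/orP[/eqP k_first | /eqP k_last] | k_mid] :=
  boolP ((index k s == 0%N) || (index k s == M.-1)).
- by rewrite /cd_part k_first.
- by rewrite /cd_part k_last eqxx orbT.
move/norP: k_mid => [/eqP ? /eqP ?].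
rewrite -{1}(nth_index k (sort_mem k)) cd_part_interior; try lia.
by rewrite lee_fin divr_ge0.
Qed.

Lemma last_position_of_value (k0 : 'I_M) :
  exists2 j, (j < M)%N /\ g (nth k0 s j) = g k0 &
    (j.+1 < M)%N -> (g k0 < g (nth k0 s j.+1))%N.
Proof.
pose P j := (j < M)%N && (g (nth k0 s j) == g k0).
have P_ex : exists j, P j.
  exists (index k0 s); rewrite /P nth_index ?sort_mem // eqxx andbT.
  by have := sort_mem k0; rewrite -index_mem sort_size.
have P_bound j : P j -> (j <= M)%N by case/andP=> /ltnW.
have [j /andP[j_lt /eqP gj] j_max] := ex_maxnP P_ex P_bound.
exists j => // succ_lt.
have succ_ge : (g k0 <= g (nth k0 s j.+1))%N by rewrite -gj sort_nth_mono.
rewrite ltn_neqAle succ_ge andbT eq_sym.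
apply/negP=> /eqP succ_eq.
by have := j_max j.+1; rewrite /P succ_lt succ_eq eqxx => /(_ isT); rewrite ltnn.
Qed.

Lemma cd_part_at_value_gap (lo hi : nat) (k0 : 'I_M) :
  (forall y, lo <= g y <= hi)%N -> (lo < hi)%N ->
  ~ (exists y, g y = g k0 + 1) ->
  exists k, g k = g k0 /\
    (((2%:R / (hi%:R - lo%:R)) : rat)%:E <= cd_part g s k)%E.
Proof.
move=> g_bounds lo_lt_hi no_succ.
have [j [j_lt gj] succ_gt] := last_position_of_value k0.
exists (nth k0 s j); split=> //.
have [/orP[/eqP j_first | /eqP j_last] | j_mid] := boolP ((j == 0%N) || (j == M.-1)).
- by rewrite /cd_part index_sort_nth // j_first leey.
- by rewrite /cd_part index_sort_nth // j_last eqxx orbT leey.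
move/norP: j_mid => [/eqP ? /eqP ?].
rewrite cd_part_interior; try lia.
have succ_ge2 : (g k0 + 2 <= g (nth k0 s j.+1))%N.
  have := succ_gt ltac:(lia); rewrite leq_eqVlt => /orP[/eqP succ_eq|]; last by lia.
  by exfalso; apply: no_succ; exists (nth k0 s j.+1); rewrite -succ_eq addn1.
have pred_le : (g (nth k0 s j.-1) <= g k0)%N by rewrite -gj sort_nth_mono //; lia.
have succ_le : (g (nth k0 s j.+1) <= g (nth k0 s M.-1))%N by rewrite sort_nth_mono; lia.
have first_le : (g (nth k0 s 0) <= g (nth k0 s j.-1))%N by rewrite sort_nth_mono; lia.
have := g_bounds (nth k0 s 0); have := g_bounds (nth k0 s M.-1).
move=> /andP[_ last_le] /andP[first_ge _].
rewrite lee_fin -natrB ?(ltnW lo_lt_hi) //.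
apply: two_div_le_ratio; lia.
Qed.

End SortedContribution.

Arguments cd_part_ge0 {M g s} s_sorted k.
Arguments cd_part_at_value_gap {M g s} s_sorted {lo hi k0}.

Lemma f1_le_n {n} (x : bitstr n) : (f1 x <= n)%N.
Proof. exact: leq_subr. Qed.

Lemma f2_eq {n} (x : bitstr n) : f2 x = n - f1 x.
Proof. by have := count_size id x; rewrite size_tuple /f1 /f2; lia. Qed.

Lemma fOMM_eq_f1 {n} (x y : bitstr n) : f1 x = f1 y -> fOMM x = fOMM y.
Proof. by rewrite /fOMM !f2_eq => ->. Qed.

Lemma fOMM_eq_f2 {n} (x y : bitstr n) : f2 x = f2 y -> fOMM x = fOMM y.
Proof.
move=> e; rewrite /fOMM e; congr pair.
by move: e (f1_le_n x) (f1_le_n y); rewrite !f2_eq; lia.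
Qed.

Lemma v1min_le {n M} (R : 'I_M -> bitstr n) (y : 'I_M) : (v1min R <= f1 (R y))%N.
Proof.
rewrite /v1min; have : y \in index_enum 'I_M by rewrite mem_index_enum.
elim: (index_enum _) => [//|a r IH]; rewrite big_cons inE => /orP[/eqP<-|/IH le_r].
  exact: geq_minl.
exact: leq_trans (geq_minr _ _) le_r.
Qed.

Lemma v1max_ge {n M} (R : 'I_M -> bitstr n) (y : 'I_M) : (f1 (R y) <= v1max R)%N.
Proof. exact: (@leq_bigmax _ (fun k => f1 (R k)) y). Qed.

Lemma v1max_le_n {n M} (R : 'I_M -> bitstr n) : (v1max R <= n)%N.
Proof. by apply/bigmax_leqP => i _; apply: f1_le_n. Qed.

Lemma inVplus_of_f1_succ {n M} (R : 'I_M -> bitstr n) {k0 y : 'I_M} :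
  f1 (R y) = f1 (R k0) + 1 -> inVplus R (fOMM (R k0)).
Proof.
move=> e; exists y; split=> //=.
by move: e (f1_le_n (R y)); rewrite !f2_eq; lia.
Qed.

Lemma inVminus_of_f2_succ {n M} (R : 'I_M -> bitstr n) {k0 y : 'I_M} :
  f2 (R y) = f2 (R k0) + 1 -> inVminus R (fOMM (R k0)).
Proof.
move=> e; exists y; split=> //=.
by move: e (f1_le_n (R y)) (f1_le_n (R k0)); rewrite !f2_eq; lia.
Qed.

Theorem lemma3 (n N : nat) (R : 'I_(2 * N) -> bitstr n)
    (s1 s2 : seq 'I_(2 * N)) :
  is_sort_by (fun a => f1 (R a)) s1 ->
  is_sort_by (fun a => f2 (R a)) s2 ->
  (v1min R < v1max R)%N ->
  forall k0 : 'I_(2 * N),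
    ~ (inVplus R (fOMM (R k0)) /\ inVminus R (fOMM (R k0))) ->
    exists k : 'I_(2 * N),
      fOMM (R k) = fOMM (R k0) /\
      (((2%:R / ((v1max R)%:R - (v1min R)%:R)) : rat)%:E <= cDis R s1 s2 k)%E.
Proof.
move=> s1_sorted s2_sorted range_pos k0 not_inner.
have max_le_n := v1max_le_n R.
have [/existsP[y /eqP f1_succ] | no_f1_succ] :=
  boolP [exists y, f1 (R y) == f1 (R k0) + 1].
- (* (v1, v2) is in V^+_in, hence not in V^-_in: use the f2-sorting. *)
  have in_plus := inVplus_of_f1_succ R f1_succ.
  have no_f2_succ : ~ exists y, f2 (R y) = f2 (R k0) + 1.
    by case=> z /(inVminus_of_f2_succ R) in_minus; apply: not_inner.
  have f2_bounds z : (n - v1max R <= f2 (R z) <= n - v1min R)%N.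
    by rewrite f2_eq; have := v1min_le R z; have := v1max_ge R z; lia.
  have [k [f2_k cd_k]] :=
    cd_part_at_value_gap s2_sorted f2_bounds ltac:(lia) no_f2_succ.
  exists k; split; first exact: fOMM_eq_f2.
  have -> : (((v1max R)%:R - (v1min R)%:R)%R : rat) =
            ((n - v1min R)%:R - (n - v1max R)%:R)%R.
    by rewrite !natrB //; last lia; ring.
  exact: lee_paddl (cd_part_ge0 s1_sorted k) cd_k.
-
  have no_f1 : ~ exists y, f1 (R y) = f1 (R k0) + 1.
    by case=> z /eqP f1_z; move/negP: no_f1_succ; apply; apply/existsP; exists z.
  have f1_bounds z : (v1min R <= f1 (R z) <= v1max R)%N.
    by rewrite v1min_le v1max_ge.
  have [k [f1_k cd_k]] := cd_part_at_value_gap s1_sorted f1_bounds range_pos no_f1.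
  exists k; split; first exact: fOMM_eq_f1.
  exact: lee_paddr (cd_part_ge0 s2_sorted k) cd_k.
Qed.
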